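(* Assume the Continuum Hypothesis. Let $X$ be a real Banach space with $\operatorname{dens} X = \operatorname{dens} X^* = \omega_1$. Then $X$ contains an overcomplete set which is dense in $X$.
   Context: $\operatorname{dens}$ denotes the density character. A subset $S$ of a Banach space $X$ with $|S| = \operatorname{dens} X$ is called overcomplete if every subset $\Lambda \subseteq S$ with $|\Lambda| = |S|$ is linearly dense in $X$. *)

From HB Require Import structures.
From mathcomp Require Import all_boot all_order all_algebra.
From mathcomp Require Import all_classical all_reals all_analysis.
Set Implicit Arguments. Unset Strict Implicit. Unset Printing Implicit Defensive.
Import Order.TTheory GRing.Theory Num.Theory.
Import numFieldNormedType.Exports.
Local Open Scope classical_set_scope.
Local Open Scope ring_scope.
Local Open Scope card_scope.

(* |A| = omega_1 : A is uncountable and of minimal uncountable cardinality,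
   i.e. every uncountable subset of A is equipotent to A. *)
Definition card_omega1 (T : Type) (A : set T) : Prop :=
  ~ countable A /\ forall B : set T, B `<=` A -> ~ countable B -> B #= A.

Definition CH (R : realType) : Prop :=
  forall A : set R, countable A \/ A #= [set: R].

(* |A| = dens T : A is equipotent to some dense subset of T and injects into
   every dense subset of T (dens T = least cardinality of a dense subset). *)
Definition card_is_dens (T : topologicalType) (U : Type) (A : set U) : Prop :=
  (exists D : set T, dense D /\ D #= A) /\
  (forall D : set T, dense D -> A #<= D).

Definition dens_omega1 (T : topologicalType) : Prop :=
  exists A : set T, card_is_dens T A /\ card_omega1 A.

Definition is_dual_elt (R : realType) (X : normedModType R) (f : X -> R) : Prop :=
  (forall (a : R) (x y : X), f (a *: x + y) = a * f x + f y) /\ continuous f.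

(* D is norm-dense in X^*: D is a set of elements of X^* and every element of
   X^* is approximated within any eps > 0 in the dual (operator) norm,
   ||f - g|| <= eps  meaning  |f x - g x| <= eps * ||x|| for all x. *)
Definition dual_dense (R : realType) (X : normedModType R) (D : set (X -> R)) : Prop :=
  (forall g, D g -> is_dual_elt g) /\
  forall f : X -> R, is_dual_elt f -> forall eps : R, 0 < eps ->
    exists2 g, D g & forall x : X, `|f x - g x| <= eps * `|x|.

Definition dual_dens_omega1 (R : realType) (X : normedModType R) : Prop :=
  exists D : set (X -> R), dual_dense D /\ card_omega1 D /\
    forall D' : set (X -> R), dual_dense D' -> D #<= D'.

Definition lin_span (R : realType) (X : normedModType R) (S : set X) : set X :=
  [set x | exists (n : nat) (c : 'I_n -> R) (v : 'I_n -> X),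
      (forall i, S (v i)) /\ x = \sum_(i < n) c i *: v i].

Definition lin_dense (R : realType) (X : normedModType R) (S : set X) : Prop :=
  closure (lin_span S) = [set: X].

Definition overcomplete (R : realType) (X : normedModType R) (S : set X) : Prop :=
  card_is_dens X S /\
  forall L : set X, L `<=` S -> L #= S -> lin_dense L.

From HB Require Import structures.
From mathcomp Require Import all_boot all_order all_algebra.
From mathcomp Require Import all_classical all_reals all_analysis.
From mathcomp Require Import ring lra.
Set Implicit Arguments. Unset Strict Implicit. Unset Printing Implicit Defensive.
Import Order.TTheory GRing.Theory Num.Theory.
Import numFieldNormedType.Exports.
Local Open Scope classical_set_scope.
Local Open Scope ring_scope.
Local Open Scope card_scope.

(* Under CH the continuum is omega_1, so a well-order of the reals cut down to
   its points with countably many predecessors indexes, with countable initial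
   segments, both X^* (which injects into D^nat for a dense D of size omega_1)
   and D0 x nat for a dense D0 of size omega_1.  Along this order choose, for
   each (a, n), a point within 1/(n+1) of a that avoids the kernels of the
   countably many nonzero functionals indexed before (a, n); this is possible by
   the Baire category theorem.  The resulting set S is dense and of size
   omega_1, and every kernel meets S only in the countably many points indexed
   before its functional.  So, by Hahn-Banach, no uncountable subset of S lies
   in a proper closed subspace. *)

Lemma card_le_of_injective T U (A : set T) (B : set U) (f : T -> U) :
  (forall x, A x -> B (f x)) ->
  (forall x y, A x -> A y -> f x = f y -> x = y) -> A #<= B.
Proof.
move=> fAB finj; have [g] : $|{injfun A >-> B}|.
  by apply/injfunPex; exists f => // x y /set_mem Ax /set_mem Ay; exact: finj.
exact: inj_card_le.
Qed.

Lemma injective_of_card_le T (U : pointedType) (A : set T) (B : set U) :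
  A #<= B -> exists f : T -> U, (forall x, A x -> B (f x)) /\
    (forall x y, A x -> A y -> f x = f y -> x = y).
Proof.
move=> /pcard_leP /injfunPex [f fAB finj]; exists f; split => // x y Ax Ay.
by apply: finj; apply/mem_set.
Qed.

Lemma countableU T (A B : set T) :
  countable A -> countable B -> countable (A `|` B).
Proof.
move=> cA cB; have -> : A `|` B = \bigcup_(i in [set: bool]) if i then A else B.
  apply/seteqP; split => [x [Ax|Bx]|x [[] _ ?]];
    [exists true|exists false|left|right] => //.
by apply: bigcup_countable => // -[].
Qed.

(** * Well-orders with countable initial segments *)

Section OmegaOne.
Variables (T : Type) (W : T -> T -> Prop) (I : set T).
Hypothesis W_total : forall x y, W x y \/ W y x.
Hypothesis W_anti : forall x y, W x y -> W y x -> x = y.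
Hypothesis W_least :
  forall N : set T, N !=set0 -> exists2 m, N m & forall y, N y -> W m y.
Hypothesis segment_countable : forall i, I i -> countable [set y | W y i].

Section Embedding.
Variables (U : Type) (B : set U).

Definition initial_embedding (G : set (T * U)) := [/\
  forall p, G p -> I p.1 /\ B p.2,
  forall x a b, G (x, a) -> G (x, b) -> a = b,
  forall x y a, G (x, a) -> G (y, a) -> x = y &
  forall x a y, G (x, a) -> I y -> W y x -> exists b, G (y, b)].

Lemma initial_embedding_bigcup (F : set (set (T * U))) :
  F `<=` initial_embedding -> total_on F subset ->
  initial_embedding (\bigcup_(G in F) G).
Proof.
move=> FP Ftot.
have common G1 G2 p q : F G1 -> F G2 -> G1 p -> G2 q ->
    exists2 G, F G & G p /\ G q.
  move=> FG1 FG2 G1p G2q; have [sub|sub] := Ftot _ _ FG1 FG2.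
  - by exists G2 => //; split => //; exact: sub.
  - by exists G1 => //; split => //; exact: sub.
split.
- move=> p [G FG Gp]; have [GIB _ _ _] := FP G FG; exact: GIB.
- move=> x a b [G1 FG1 G1a] [G2 FG2 G2b].
  have [G FG [Ga Gb]] := common _ _ _ _ FG1 FG2 G1a G2b.
  by have [_ Gfun _ _] := FP G FG; exact: Gfun Ga Gb.
- move=> x y a [G1 FG1 G1a] [G2 FG2 G2b].
  have [G FG [Ga Gb]] := common _ _ _ _ FG1 FG2 G1a G2b.
  by have [_ _ Ginj _] := FP G FG; exact: Ginj Ga Gb.
- move=> x a y [G FG Gx] Iy Wyx; have [_ _ _ ext] := FP G FG.
  by have [b Gb] := ext _ _ _ Gx Iy Wyx; exists b, G.
Qed.

Lemma initial_embedding_countable G m : initial_embedding G ->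
  I m -> ~ (exists b, G (m, b)) -> countable G.
Proof.
move=> [_ Gfun _ Gdown] Im Gm.
apply: sub_countable (segment_countable Im).
apply: (card_le_of_injective (f := fst)).
- move=> [y a] Gya; have [//|Wmy] := W_total y m.
  by have [b Gmb] := Gdown _ _ _ Gya Im Wmy; exfalso; apply: Gm; exists b.
- move=> [y a] [y' a'] Ga Ga' /= eq_y; move: Ga'; rewrite -eq_y => Ga'.
  by rewrite (Gfun _ _ _ Ga Ga').
Qed.

Lemma initial_embedding_extend G m b : initial_embedding G ->
  I m -> ~ (exists b, G (m, b)) ->
  (forall y, I y -> ~ (exists b, G (y, b)) -> W m y) ->
  B b -> ~ (snd @` G) b -> initial_embedding (G `|` [set (m, b)]).
Proof.
move=> [GIB Gfun Ginj Gdown] Im Gm m_least Bb Gb.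
have Gm' a : ~ G (m, a) by move=> Gma; apply: Gm; exists a.
have Gb' y : ~ G (y, b) by move=> Gyb; apply: Gb; exists (y, b).
split.
- by move=> p [Gp|->]; [exact: GIB|].
- move=> x a a' [Ga|[ex ea]] [Ga'|[ex' ea']]; subst.
  + exact: Gfun Ga Ga'.
  + by case: (Gm' a).
  + by case: (Gm' a').
  + by [].
- move=> x y a [Ga|[ex ea]] [Ga'|[ex' ea']]; subst.
  + exact: Ginj Ga Ga'.
  + by case: (Gb' x).
  + by case: (Gb' y).
  + by [].
- move=> x a y [Ga|[-> _]] Iy Wyx.
    by have [b' Gyb] := Gdown _ _ _ Ga Iy Wyx; exists b'; left.
  have [[b' Gyb']|Gy] := pselect (exists b', G (y, b')); first by exists b'; left.
  by exists b; right; rewrite (W_anti Wyx (m_least y Iy Gy)).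
Qed.

Lemma omega1_embedding : ~ countable B ->
  exists h : T -> U, (forall i, I i -> B (h i)) /\
    (forall x y, I x -> I y -> h x = h y -> x = y).
Proof.
move=> Bunc.
have [M [Memb Mmax]] := Zorn_bigcup initial_embedding_bigcup.
have Mtotal i : I i -> exists b, M (i, b).
  move=> Ii; apply: contrapT => Mi.
  have [m [Im Mm] m_least] :=
    W_least (N := [set y | I y /\ ~ exists b, M (y, b)]) (ex_intro _ i (conj Ii Mi)).
  have [b Bb Mb] : exists2 b, B b & ~ (snd @` M) b.
    apply: contrapT => /forall2NP sndM; apply: Bunc.
    apply: (@sub_countable _ _ _ (snd @` M)).
      by apply: subset_card_le => b Bb; have [//|/contrapT] := sndM b.
    apply: sub_countable (card_image_le snd M) _.
    exact: initial_embedding_countable Memb Im Mm.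
  apply: Mmax (M `|` [set (m, b)]) _ _.
    by split => [p|/(_ (m, b) (or_intror erefl)) Mmb]; [left|apply: Mm; exists b].
  exact: initial_embedding_extend (fun y Iy Ny => m_least y (conj Iy Ny)) Bb Mb.
have [b0 _] : B !=set0.
  by apply/set0P/negP => /eqP B0; apply: Bunc; rewrite B0.
have /choice[h hM] i : exists b, I i -> M (i, b).
  by have [/Mtotal[b Mb]|] := pselect (I i); [exists b|exists b0].
have [MIB _ Minj _] := Memb.
exists h; split => [i /hM /MIB []//|x y Ix Iy hxy].
by apply: (Minj _ _ (h x) (hM _ Ix)); rewrite hxy; exact: hM.
Qed.

End Embedding.

Lemma omega1_card_eq (V : Type) (A : set V) :
  ~ countable I -> card_omega1 A -> A #= I.
Proof.
move=> Iunc [Aunc Amin]; have [h [hA hinj]] := omega1_embedding Aunc.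
have hI : h @` I #= I.
  by apply: inj_card_eq => x y /set_mem Ix /set_mem Iy; exact: hinj.
apply: (card_eq_trans _ hI); rewrite card_eq_sym; apply: Amin.
  by move=> _ [i Ii <-]; exact: hA.
by rewrite (eq_countable hI).
Qed.

End OmegaOne.

Lemma omega1_rank (T : pointedType) (W : T -> T -> Prop) (I : set T)
    (V : Type) (P : set V) :
  (forall i, I i -> countable [set y | W y i]) -> P #<= I ->
  exists rank : V -> T, (forall p, P p -> I (rank p)) /\
    forall j, I j -> countable [set p | P p /\ W (rank p) j].
Proof.
move=> I_segment /injective_of_card_le[h [hI hinj]]; exists h; split => // j Ij.
apply: sub_countable (I_segment _ Ij).
by apply: (card_le_of_injective (f := h)) => [p []|p q [Pp _] [Pq _]]; last exact: hinj.
Qed.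

Lemma real_uncountable (R : realType) : ~ countable [set: R].
Proof.
move=> /(sub_countable (subset_card_le (@subsetT _ (ball (0 : R) 1)))).
move=> /countable_lebesgue_measure0; rewrite lebesgue_measure_ball //.
by move=> /eqP; rewrite eqe pnatr_eq0.
Qed.

Lemma well_order_props (T : eqType) (W : rel T) : wochoice.well_order W ->
  [/\ forall x y, W x y \/ W y x, forall x y, W x y -> W y x -> x = y &
      forall N : set T, N !=set0 -> exists2 m, N m & forall y, N y -> W m y].
Proof.
move=> wo; have woT : wochoice.wo_chain W predT by move=> A _; exact: wo.
split.
- by move=> x y; have /orP[] := wochoice.wo_chainW woT (x := x) (y := y) isT isT;
    [left|right].
- move=> x y Wxy Wyx.
  by apply: (wochoice.wo_chain_antisymmetric woT) => //; rewrite Wxy Wyx.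
- move=> N [x Nx]; have [|m [[Nm mlb] _]] := wo [pred y | y \in N].
    by exists x; rewrite inE.
  exists m => [|y Ny]; first by move: Nm; rewrite inE.
  by apply: mlb; rewrite inE.
Qed.

Lemma CH_omega1_order (R : realType) : CH R ->
  exists (W : R -> R -> Prop) (I : set R), [/\
    forall x y, W x y \/ W y x, forall x y, W x y -> W y x -> x = y,
    forall N : set R, N !=set0 -> exists2 m, N m & forall y, N y -> W m y,
    forall i, I i -> countable [set y | W y i] & [set: R] #<= I].
Proof.
move=> ch; have [W wo] := wochoice.well_ordering_principle R.
have [W_total W_anti W_least] := well_order_props wo.
pose I := [set x | countable [set y | W y x]].
exists (fun x y => W x y), I; split => //.
have Iunc : ~ countable I.
  move=> cI; have [|m Im m_least] := W_least (~` I).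
    apply/set0P/negP => /eqP; rewrite -setCT => /setC_inj IT.
    by apply: (@real_uncountable R); rewrite -IT.
  apply: Im; apply: sub_countable (countableU cI (countable1 m)).
  apply: subset_card_le => y /= Wym.
  have [Iy|nIy] := pselect (I y); [by left|right].
  exact: W_anti Wym (m_least y nIy).
by case: (ch I) => // /card_esym /card_eqPle [].
Qed.

(** * Coding sequences of reals by reals *)

Section RealCoding.
Variable R : realType.

Definition rat_cut (x : R) : nat -> bool :=
  fun k => if @unpickle rat k is Some q then ratr q < x else false.

Lemma rat_cut_inj : injective rat_cut.
Proof.
suff lt_neq x y : x < y -> rat_cut x <> rat_cut y.
  by move=> x y exy; case: (ltgtP x y) => // /lt_neq; rewrite exy // => /(_ erefl).
move=> xy; have [q] := rat_in_itvoo xy; rewrite in_itv /= => /andP[xq qy].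
move=> /(congr1 (fun f => f (pickle q))); rewrite /rat_cut pickleK qy.
by rewrite ltNge (ltW xq).
Qed.

Definition uncurry_code (s : nat -> nat -> bool) : nat -> bool :=
  fun k => if @unpickle (nat * nat)%type k is Some p then s p.1 p.2 else false.

Lemma uncurry_code_inj : injective uncurry_code.
Proof.
move=> s t est; apply/funext => n; apply/funext => m.
by have := congr1 (fun f => f (pickle (n, m))) est; rewrite /uncurry_code pickleK.
Qed.

Definition ternary_sum (b : nat -> bool) (m : nat) : R :=
  \sum_(i < m) (b i)%:R * 3^-1 ^+ i.

(* Digits 0 and 1 in base 3: each digit outweighs the whole tail after it. *)
Definition ternary (b : nat -> bool) : R := sup (range (ternary_sum b)).

Section Ternary.
Variable b : nat -> bool.

Lemma ternary_sumS m : ternary_sum b m.+1 = ternary_sum b m + (b m)%:R * 3^-1 ^+ m.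
Proof. by rewrite /ternary_sum big_ord_recr. Qed.

Lemma ternary_sum_le m n : (m <= n)%N -> ternary_sum b m <= ternary_sum b n.
Proof.
move=> /subnKC <-; elim: (n - m)%N => [|d IH]; first by rewrite addn0.
rewrite addnS ternary_sumS; apply: (le_trans IH).
by rewrite lerDl mulr_ge0 // exprn_ge0.
Qed.

Lemma ternary_sum_tail m n : (m <= n)%N ->
  ternary_sum b n + 3 / 2 * 3^-1 ^+ n <= ternary_sum b m + 3 / 2 * 3^-1 ^+ m.
Proof.
move=> /subnKC <-; elim: (n - m)%N => [|d IH]; first by rewrite addn0.
apply: le_trans IH; rewrite addnS ternary_sumS exprS -addrA lerD2l.
have w0 : 0 <= 3^-1 ^+ (m + d) :> R by rewrite exprn_ge0.
by case: (b _); rewrite ?mul1r ?mul0r; lra.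
Qed.

Lemma ternary_sum_le_ternary m : ternary_sum b m <= ternary b.
Proof.
apply: ub_le_sup; last by exists m.
exists (3 / 2) => _ [n _ <-]; have := ternary_sum_tail (leq0n n).
have w0 : 0 <= 3^-1 ^+ n :> R by rewrite exprn_ge0.
by rewrite /ternary_sum big_ord0 expr0; lra.
Qed.

Lemma ternary_le c : (forall m, ternary_sum b m <= c) -> ternary b <= c.
Proof.
by move=> bc; apply: ge_sup => [|_ [n _ <-]]; [exists (ternary_sum b 0), 0%N|].
Qed.

End Ternary.

Lemma ternary_lt (b b' : nat -> bool) k : (forall i, (i < k)%N -> b i = b' i) ->
  b k -> ~~ b' k -> ternary b' < ternary b.
Proof.
move=> eq_bk bk b'k.
have eq_sum : ternary_sum b k = ternary_sum b' k.
  by apply: eq_bigr => i _; rewrite eq_bk.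
have w0 : 0 < 3^-1 ^+ k :> R by rewrite exprn_gt0.
have b'_le : ternary b' <= ternary_sum b' k + 3^-1 ^+ k / 2.
  apply: ternary_le => n.
  have := ternary_sum_le b' (leq_maxl n k.+1).
  have := ternary_sum_tail b' (leq_maxr n k.+1).
  have : 0 <= 3^-1 ^+ maxn n k.+1 :> R by rewrite exprn_ge0.
  have -> : 3 / 2 * 3^-1 ^+ k.+1 = 3^-1 ^+ k / 2 :> R by rewrite exprS; field.
  by rewrite ternary_sumS (negbTE b'k) mul0r addr0; lra.
have := ternary_sum_le_ternary b k.+1; rewrite ternary_sumS bk eq_sum mul1r.
by lra.
Qed.

Lemma ternary_inj : injective ternary.
Proof.
move=> b b' ebb'; apply/funext => n; apply: contrapT => /eqP neq.
have [k neqk mink] := ex_minnP (ex_intro (fun i => b i != b' i) n neq).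
have eq_bk i : (i < k)%N -> b i = b' i.
  by move=> ik; apply/eqP; apply: contraTT ik => /mink; rewrite leqNgt.
move: neqk; case bk: (b k); case b'k: (b' k) => // _.
- by have := ternary_lt eq_bk bk (negbT b'k); rewrite ebb' ltxx.
- have := @ternary_lt b' b k (fun i ik => esym (eq_bk i ik)) b'k (negbT bk).
  by rewrite ebb' ltxx.
Qed.

Definition seq_code (s : nat -> R) : R :=
  ternary (uncurry_code (fun n => rat_cut (s n))).

Lemma seq_code_inj : injective seq_code.
Proof.
move=> s t /ternary_inj /uncurry_code_inj est; apply/funext => n.
exact/rat_cut_inj/(congr1 (fun f => f n) est).
Qed.

End RealCoding.

(** * Hahn-Banach *)

Section LinearForms.
Variables (R : realType) (X : normedModType R).

Definition linear_form (f : X -> R) :=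
  forall (a : R) (x y : X), f (a *: x + y) = a * f x + f y.

Definition nonzero_dual (f : X -> R) := is_dual_elt f /\ exists v, f v != 0.

Lemma linear_form0 f : linear_form f -> f 0 = 0.
Proof. by move=> fl; have := fl 1 0 0; rewrite scale1r addr0 mul1r; lra. Qed.

Lemma linear_formN f x : linear_form f -> f (- x) = - f x.
Proof.
by move=> fl; have := fl (-1) x 0; rewrite addr0 linear_form0 // addr0 scaleN1r mulN1r.
Qed.

Lemma linear_formB f x y : linear_form f -> f (x - y) = f x - f y.
Proof. by move=> fl; rewrite -[x]scale1r fl linear_formN // mul1r scale1r. Qed.

Lemma linear_form_continuous f (k : R) : linear_form f -> 0 < k ->
  (forall x, `|f x| <= k * `|x|) -> continuous f.
Proof.
move=> fl k0 fb x; apply/cvgrPdist_lt => e e0.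
apply/nbhs_ballP; exists (e / k) => /=; first by rewrite divr_gt0.
move=> y; rewrite -ball_normE /= => xy.
rewrite -linear_formB //; apply: (le_lt_trans (fb _)).
by rewrite -ltr_pdivlMl // mulrC.
Qed.

Lemma lin_span0 (L : set X) : lin_span L 0.
Proof. by exists 0%N, (fun=> 0), (fun=> 0); rewrite big_ord0; split => // -[]. Qed.

Lemma lin_span_sub (L : set X) : L `<=` lin_span L.
Proof.
by move=> x Lx; exists 1%N, (fun=> 1), (fun=> x); rewrite big_ord1 scale1r.
Qed.

Lemma lin_spanD (L : set X) a x y : lin_span L x -> lin_span L y ->
  lin_span L (a *: x + y).
Proof.
move=> [n [c [v [Lv ->]]]] [m [d [u [Lu ->]]]].
exists (n + m)%N.
exists (fun k => match fintype.split k with inl i => a * c i | inr j => d j end).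
exists (fun k => match fintype.split k with inl i => v i | inr j => u j end).
split; first by move=> k; case: (fintype.split k).
rewrite big_split_ord /= scaler_sumr; congr (_ + _); apply: eq_bigr => i _.
- by rewrite (unsplitK (inl i)) scalerA.
- by rewrite (unsplitK (inr i)).
Qed.

Lemma linear_combination_extension (x y z : X) (s t l : R) :
  l *: (x + s *: z) + (y + t *: z) = (l *: x + y) + (l * s + t) *: z.
Proof. by rewrite scalerDr scalerA scalerDl addrACA. Qed.

End LinearForms.

Section HahnBanach.
Variables (R : realType) (X : normedModType R) (p : X -> R).
Hypothesis p_add : forall x y, p (x + y) <= p x + p y.
Hypothesis p_scale : forall (t : R) x, 0 < t -> p (t *: x) = t * p x.

Definition dominated_graph (G : set (X * R)) := [/\
  forall x a b, G (x, a) -> G (x, b) -> a = b,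
  forall x a y b l, G (x, a) -> G (y, b) -> G (l *: x + y, l * a + b) &
  forall x a, G (x, a) -> a <= p x].

Definition graph_extension (G : set (X * R)) z c : set (X * R) :=
  [set q | exists x a t, G (x, a) /\ q = (x + t *: z, a + t * c)].

Lemma extension_bounds G z : dominated_graph G -> G (0, 0) ->
  exists c, (forall y b, G (y, b) -> b - p (y - z) <= c) /\
            (forall w e, G (w, e) -> c <= p (w + z) - e).
Proof.
move=> [_ Glin Gp] G00.
pose S := [set v | exists y b, G (y, b) /\ v = b - p (y - z)].
have S_ub w e : G (w, e) -> ubound S (p (w + z) - e).
  move=> Gwe _ [y [b [Gyb ->]]].
  have := Gp _ _ (Glin _ _ _ _ 1 Gyb Gwe); rewrite scale1r mul1r.
  have := p_add (y - z) (w + z); rewrite addrACA addNr addr0.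
  lra.
exists (sup S); split.
- move=> y b Gyb; apply: ub_le_sup; last by exists y, b.
  by exists (p (0 + z) - 0); exact: S_ub G00.
- move=> w e Gwe; apply: ge_sup (S_ub _ _ Gwe).
  by exists (0 - p (0 - z)), 0, 0.
Qed.

Lemma dominated_graph_extension G z c : dominated_graph G -> G (0, 0) ->
  ~ (exists a, G (z, a)) ->
  (forall y b, G (y, b) -> b - p (y - z) <= c) ->
  (forall w e, G (w, e) -> c <= p (w + z) - e) ->
  dominated_graph (graph_extension G z c).
Proof.
move=> [Gfun Glin Gp] G00 Gz c_lb c_ub.
have Gscale l x a : G (x, a) -> G (l *: x, l * a).
  by move=> /(Glin _ _ _ _ l)/(_ G00); rewrite !addr0.
split.
- move=> x a b [x1 [a1 [t1 [G1 [-> ->]]]]] [x2 [a2 [t2 [G2 [ex ->]]]]].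
  have [et|t12] := eqVneq t1 t2.
    subst t2; have ex12 : x1 = x2 := addIr (t1 *: z) ex.
    by rewrite ex12 in G1; rewrite (Gfun _ _ _ G1 G2).
  exfalso; apply: Gz; exists ((t1 - t2)^-1 * (a2 - a1)).
  have -> : z = (t1 - t2)^-1 *: (x2 - x1).
    apply: (@scalerI _ _ (t1 - t2)); first by rewrite subr_eq0.
    rewrite scalerA mulfV ?subr_eq0 // scale1r scalerBl.
    by apply: (addrI x1); rewrite addrA ex addrK addrCA subrr addr0.
  apply: Gscale; have := Glin _ _ _ _ (-1) G1 G2.
  by rewrite scaleN1r mulN1r (addrC (- x1)) (addrC (- a1)).
- move=> x a y b l [x1 [a1 [s [G1 [-> ->]]]]] [y1 [b1 [t [G2 [-> ->]]]]].
  exists (l *: x1 + y1), (l * a1 + b1), (l * s + t); split; first exact: Glin.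
  by rewrite linear_combination_extension; congr (_, _); ring.
- move=> x a [x1 [a1 [t [G1 [-> ->]]]]].
  have [t_lt0|t_gt0|->] := ltgtP t 0; last by rewrite scale0r mul0r !addr0; exact: Gp.
  + have s_gt0 : 0 < - t by rewrite oppr_gt0.
    have := c_lb _ _ (Gscale (- t)^-1 _ _ G1).
    have -> : (- t)^-1 *: x1 - z = (- t)^-1 *: (x1 + t *: z).
      by rewrite scalerDr scalerA invrN mulNr mulVf ?lt_eqF // scaleN1r.
    rewrite p_scale ?invr_gt0 // -mulrBr => /(ler_wpM2l (ltW s_gt0)).
    by rewrite mulrA mulfV ?gt_eqF // mul1r mulNr; lra.
  + have := c_ub _ _ (Gscale t^-1 _ _ G1).
    have -> : t^-1 *: x1 + z = t^-1 *: (x1 + t *: z).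
      by rewrite scalerDr scalerA mulVf ?gt_eqF // scale1r.
    rewrite p_scale ?invr_gt0 // -mulrBr => /(ler_wpM2l (ltW t_gt0)).
    by rewrite mulrA mulfV ?gt_eqF // mul1r; lra.
Qed.

Lemma dominated_graph_bigcup G0 (F : set (set (X * R))) : dominated_graph G0 ->
  F `<=` (fun H => dominated_graph (H `|` G0)) -> total_on F subset ->
  dominated_graph ((\bigcup_(H in F) H) `|` G0).
Proof.
move=> G0dom FP Ftot; set U := _ `|` G0.
have common q1 q2 : U q1 -> U q2 ->
    exists2 H, dominated_graph H & [/\ H `<=` U, H q1 & H q2].
  have sub H : F H -> H `|` G0 `<=` U by move=> FH q [Hq|G0q]; [left; exists H|right].
  move=> [[H1 FH1 H1q]|G0q1] [[H2 FH2 H2q]|G0q2].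
  - have [s12|s21] := Ftot _ _ FH1 FH2.
    + by exists (H2 `|` G0); [exact: FP|split; [exact: sub|left; exact: s12|left]].
    + by exists (H1 `|` G0); [exact: FP|split; [exact: sub|left|left; exact: s21]].
  - by exists (H1 `|` G0); [exact: FP|split; [exact: sub|left|right]].
  - by exists (H2 `|` G0); [exact: FP|split; [exact: sub|right|left]].
  - by exists G0 => //; split => // q G0q; right.
split.
- move=> x a b Ua Ub; have [H [Hfun _ _] [_ Ha Hb]] := common _ _ Ua Ub.
  exact: Hfun Ha Hb.
- move=> x a y b l Ua Ub; have [H [_ Hlin _] [HU Ha Hb]] := common _ _ Ua Ub.
  exact/HU/Hlin.
- move=> x a Ua; have [H [_ _ Hp] [_ Ha _]] := common _ _ Ua Ua.
  exact: Hp Ha.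
Qed.

Lemma hahn_banach_graph G0 : dominated_graph G0 -> G0 (0, 0) ->
  exists f : X -> R, [/\ linear_form f, forall x, f x <= p x &
                         forall x a, G0 (x, a) -> f x = a].
Proof.
move=> G0dom G00.
have [A [Adom Amax]] := @Zorn_bigcup _ (fun H => dominated_graph (H `|` G0))
  (fun F => @dominated_graph_bigcup G0 F G0dom).
set H := A `|` G0; have H00 : H (0, 0) by right.
have [Hfun Hlin Hp] := Adom.
have Htotal z : exists c, H (z, c).
  apply: contrapT => Hz.
  have [c [c_lb c_ub]] := extension_bounds z Adom H00.
  have ext_dom := dominated_graph_extension Adom H00 Hz c_lb c_ub.
  have H_ext : H `<=` graph_extension H z c.
    by move=> [x a] Hxa; exists x, a, 0; rewrite scale0r mul0r !addr0.
  apply: (Amax (graph_extension H z c)).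
    split=> [q Aq|/(_ (z, c)) Az]; first by apply: H_ext; left.
    by apply: Hz; exists c; left; apply: Az; exists 0, 0, 1;
      rewrite add0r scale1r add0r mul1r.
  suff -> : graph_extension H z c `|` G0 = graph_extension H z c by [].
  by apply/seteqP; split => q; [case=> // G0q; apply: H_ext; right|left].
have [f fH] := choice Htotal.
exists f; split.
- by move=> a x y; apply: (Hfun (a *: x + y)); [exact: fH|exact: Hlin (fH x) (fH y)].
- by move=> x; exact: Hp (fH x).
- by move=> x a G0xa; apply: Hfun (fH x) _; right.
Qed.

End HahnBanach.

Section Separation.
Variables (R : realType) (X : normedModType R).

Lemma separating_functional (M : set X) (x0 : X) (r : R) :
  M 0 -> (forall a x y, M x -> M y -> M (a *: x + y)) -> 0 < r ->
  (forall m, M m -> r <= `|x0 - m|) ->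
  exists f : X -> R, [/\ linear_form f, forall x, f x <= `|x| / r,
                         f x0 = 1 & forall m, M m -> f m = 0].
Proof.
move=> M0 Mlin r0 x0_far.
have Mscale a x : M x -> M (a *: x) by move=> /(Mlin a _ _)/(_ M0); rewrite addr0.
have x0M : ~ M x0 by move=> /x0_far; rewrite subrr normr0 leNgt r0.
pose G0 := [set q | exists m t, M m /\ q = (m + t *: x0, t)].
have G0dom : dominated_graph (fun x => `|x| / r) G0.
  split.
  - move=> x a b [m [t [Mm [-> ->]]]] [m' [t' [Mm' [ex ->]]]].
    apply: contrapT => /eqP tt'; apply: x0M.
    have -> : x0 = (t - t')^-1 *: (m' - m).
      apply: (@scalerI _ _ (t - t')); first by rewrite subr_eq0.
      rewrite scalerA mulfV ?subr_eq0 // scale1r scalerBl.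
      by apply: (addrI m); rewrite addrA ex addrK addrCA subrr addr0.
    by apply: Mscale; have := Mlin (-1) _ _ Mm Mm'; rewrite scaleN1r addrC.
  - move=> x a y b l [m [s [Mm [-> ->]]]] [m' [t [Mm' [-> ->]]]].
    exists (l *: m + m'), (l * s + t); split; first exact: Mlin.
    by rewrite linear_combination_extension.
  - move=> x a [m [t [Mm [-> ->]]]].
    have [t_le0|t_gt0] := leP t 0; first by rewrite (le_trans t_le0) // divr_ge0 // ltW.
    have := x0_far _ (Mscale (- t^-1) _ Mm).
    have -> : x0 - (- t^-1) *: m = t^-1 *: (m + t *: x0).
      by rewrite scalerDr scalerA mulVf ?gt_eqF // scale1r scaleNr opprK addrC.
    by rewrite normrZ gtr0_norm ?invr_gt0 // ler_pdivlMr // -ler_pdivlMl.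
have p_add (x y : X) : `|x + y| / r <= `|x| / r + `|y| / r.
  by rewrite -mulrDl ler_pM2r ?invr_gt0 // ler_normD.
have p_scale t (x : X) : 0 < t -> `|t *: x| / r = t * (`|x| / r).
  by move=> t0; rewrite normrZ gtr0_norm // mulrA.
have G00 : G0 (0, 0) by exists 0, 0; rewrite scale0r addr0.
have [f [fl fp fG0]] := hahn_banach_graph p_add p_scale G0dom G00.
exists f; split => //.
- by apply: fG0; exists 0, 1; rewrite add0r scale1r.
- by move=> m Mm; apply: fG0; exists m, 0; rewrite scale0r addr0.
Qed.

Lemma annihilator_of_not_lin_dense (L : set X) : ~ lin_dense L ->
  exists2 f, nonzero_dual f & forall l, L l -> f l = 0.
Proof.
move=> nLd; have [x0 x0L] : exists x0, ~ closure (lin_span L) x0.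
  apply: contrapT => /forallNP cl; apply: nLd.
  by apply/seteqP; split => // x _; apply: contrapT; exact: cl.
have [B nB disj] : exists2 B, nbhs x0 B & ~ (lin_span L `&` B !=set0).
  apply: contrapT => nsep; apply: x0L => B nB; apply: contrapT => LB.
  by apply: nsep; exists B.
have [r r0 rB] := (nbhs_ballP _ _).1 nB.
have x0_far m : lin_span L m -> r <= `|x0 - m|.
  move=> Lm; rewrite leNgt; apply/negP => mB; apply: disj; exists m; split => //.
  by apply: rB; rewrite -ball_normE.
have [f [fl fp f1 f0]] :=
  separating_functional (@lin_span0 _ _ L) (@lin_spanD _ _ L) r0 x0_far.
exists f; last by move=> l /lin_span_sub; exact: f0.
split; last by exists x0; rewrite f1 oner_neq0.
split => //; apply: (linear_form_continuous (k := r^-1)) => //; first by rewrite invr_gt0.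
move=> x; rewrite ler_norml mulrC fp andbT lerNl -linear_formN //.
by rewrite (le_trans (fp _)) // normrN.
Qed.

End Separation.

(** * Avoiding countably many kernels *)

Section BaireAvoidance.
Variables (R : realType) (X : completeNormedModType R).

Lemma open_nonvanishing (f : X -> R) : continuous f -> open [set x | f x != 0].
Proof.
move=> fc; rewrite openE => x /= fx0.
have /cvgrPdist_lt/(_ `|f x|) := fc x; rewrite normr_gt0 fx0 => /(_ isT).
by apply: filterS => y /=; apply: contraTneq => ->; rewrite subr0 ltxx.
Qed.

Lemma dense_nonvanishing (f : X -> R) : linear_form f -> (exists v, f v != 0) ->
  dense [set x | f x != 0].
Proof.
move=> fl [v fv] O [y Oy] oO.
have [fy0|] := eqVneq (f y) 0; last by exists y.
have [e e0 eO] := (nbhs_ballP _ _).1 (open_nbhs_nbhs (conj oO Oy)).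
pose t := e / (2 * (`|v| + 1)).
have t0 : 0 < t by rewrite divr_gt0 // mulr_gt0 // ltr_wpDl.
exists (t *: v + y); split; last by rewrite /= fl fy0 addr0 mulf_neq0 // gt_eqF.
apply: eO; rewrite -ball_normE /= opprD addrCA subrr addr0 normrN normrZ gtr0_norm //.
have tv : t * `|v| <= e / 2.
  have -> : t * `|v| = e * (`|v| / (2 * (`|v| + 1))) by rewrite /t mulrAC -mulrA.
  apply: ler_wpM2l; first exact: ltW.
  by rewrite ler_pdivrMr ?mulr_gt0 ?ltr_wpDl // mulrA mulVf // mul1r lerDl.
by apply: (le_lt_trans tv); rewrite ltr_pdivrMr // ltr_pMr // ltr1n.
Qed.

Lemma ball_avoiding_kernels (C : set (X -> R)) : countable C ->
  (forall f, C f -> nonzero_dual f) -> forall a e, 0 < e ->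
  exists2 x, ball a e x & forall f, C f -> f x != 0.
Proof.
move=> /pfcard_geP[->|/surjfunPex[g ->]] Cdual a e e0.
  by exists a => //; exact: ballxx.
have [x [ax gx]] : ball a e `&` \bigcap_n [set x | g n x != 0] !=set0.
  apply: Baire; [|by exists a; exact: ballxx|exact: ball_open].
  move=> n; have [[fl fc] fnz] := Cdual (g n) (imageP _ I).
  by split; [exact: open_nonvanishing|exact: dense_nonvanishing].
by exists x => // _ [n _ <-]; exact: gx.
Qed.

End BaireAvoidance.

(** * The cardinality of the dual *)

Lemma exists_invS_lt (R : realType) (e : R) : 0 < e -> exists n : nat, n.+1%:R^-1 < e.
Proof.
move=> e0; exists (Num.truncn e^-1).
by rewrite -ltf_pV2 ?(posrE, divr_gt0) // invrK truncnS_gt.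
Qed.

Lemma eq0_le_invS (R : realType) (d c : R) :
  (forall n : nat, `|d| <= n.+1%:R^-1 * c) -> d = 0.
Proof.
move=> dc; apply: contrapT => /eqP d0; have d_gt0 : 0 < `|d| by rewrite normr_gt0.
have c0 : 0 < c by apply: lt_le_trans d_gt0 _; have := dc 0%N; rewrite invr1 mul1r.
have [n] := exists_invS_lt (divr_gt0 d_gt0 c0).
by rewrite ltr_pdivlMr // ltNge dc.
Qed.

Lemma dual_card_le_real (R : realType) (X : normedModType R) (D : set (X -> R)) :
  dual_dense D -> D #<= [set: R] -> (@is_dual_elt R X) #<= [set: R].
Proof.
move=> [_ Dapprox] /injective_of_card_le[k [_ kinj]].
have /choice[s sP] f : exists s : nat -> X -> R, is_dual_elt f -> forall n,
    D (s n) /\ forall x, `|f x - s n x| <= n.+1%:R^-1 * `|x|.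
  have [/Dapprox fD|] := pselect (is_dual_elt f); last by exists (fun _ _ => 0).
  have /choice[s sn] n : exists g, D g /\ forall x, `|f x - g x| <= n.+1%:R^-1 * `|x|.
    have n_gt0 : 0 < n.+1%:R^-1 :> R by rewrite invr_gt0.
    by have [g Dg fg] := fD _ n_gt0; exists g.
  by exists s.
apply: (card_le_of_injective (f := fun f => seq_code (fun n => k (s f n)))) => //.
move=> f g fd gd /seq_code_inj efg; apply/funext => x; apply/eqP; rewrite -subr_eq0; apply/eqP.
apply: (@eq0_le_invS R _ (2 * `|x|)) => n.
have sfg : s f n = s g n.
  apply: kinj; [exact: (sP f fd n).1|exact: (sP g gd n).1|].
  exact: (congr1 (fun h => h n) efg).
have := ler_normB (f x - s f n x) (g x - s g n x).
rewrite sfg opprB addrA subrK => /le_trans; apply.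
rewrite mulrCA mulr_natl mulr2n lerD //; first by rewrite -sfg; exact: (sP f fd n).2.
exact: (sP g gd n).2.
Qed.

Lemma setX_nat_card_le_real (R : realType) (T : Type) (A : set T) :
  A #<= [set: R] -> A `*` [set: nat] #<= [set: R].
Proof.
move=> /injective_of_card_le[k [_ kinj]].
apply: (card_le_of_injective
  (f := fun p => seq_code (fun i => if i is 0 then k p.1 else p.2%:R))) => //.
move=> [a n] [b m] [Aa _] [Ab _] /seq_code_inj eab.
have -> : a = b by apply: kinj => //; exact: (congr1 (fun s => s 0%N) eab).
by have /= /eqP := congr1 (fun s => s 1%N) eab; rewrite eqr_nat => /eqP ->.
Qed.

(** * The dense overcomplete set *)

Section DenseConstruction.
Variables (R : realType) (X : completeNormedModType R).

Lemma dense_perturbation (D0 : set X) (xp : X * nat -> X) : dense D0 ->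
  (forall a n, D0 a -> ball a n.+1%:R^-1 (xp (a, n))) ->
  dense (xp @` (D0 `*` [set: nat])).
Proof.
move=> D0dense xpP O [y Oy] Oopen.
have [e e0 eO] := (nbhs_ballP _ _).1 (open_nbhs_nbhs (conj Oopen Oy)).
have e2 : 0 < e / 2 by rewrite divr_gt0.
have [a [ya D0a]] : ball y (e / 2) `&` D0 !=set0.
  by apply: D0dense; [exists y; exact: ballxx|exact: ball_open].
have [n ne] := exists_invS_lt e2.
exists (xp (a, n)); split; last by exists (a, n).
apply: eO; have := xpP a n D0a; rewrite -ball_normE /= in ya * => ax.
have := ler_normD (y - a) (a - xp (a, n)); rewrite addrA subrK => /le_lt_trans.
by apply; rewrite [e]splitr ltrD // (lt_trans ax).
Qed.

Variables (J : Type) (W : J -> J -> Prop).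
Hypothesis W_total : forall i j, W i j \/ W j i.
Variables (D0 : set X) (rank : X * nat -> J) (frank : (X -> R) -> J).
Hypothesis D0_dense : dense D0.
Hypothesis rank_segment : forall f, is_dual_elt f ->
  countable [set p | (D0 `*` [set: nat]) p /\ W (rank p) (frank f)].
Hypothesis frank_segment : forall p, (D0 `*` [set: nat]) p ->
  countable [set f | is_dual_elt f /\ W (frank f) (rank p)].

(* The point chosen for p avoids the kernels of all functionals ranked below p;
   a kernel can then only contain points ranked below its functional. *)
Lemma dense_set_countable_kernels : exists S : set X, [/\ dense S,
  S #<= D0 `*` [set: nat] &
  forall f, nonzero_dual f -> countable (S `&` [set x | f x = 0])].
Proof.
have /choice[xp xpP] p : exists x, (D0 `*` [set: nat]) p ->
    ball p.1 p.2.+1%:R^-1 x /\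
    forall f, nonzero_dual f -> W (frank f) (rank p) -> f x != 0.
  have [Pp|Pp] := pselect ((D0 `*` [set: nat]) p); last by exists 0 => /Pp.
  have n_gt0 : 0 < p.2.+1%:R^-1 :> R by rewrite invr_gt0.
  have Cp : countable [set f | nonzero_dual f /\ W (frank f) (rank p)].
    by apply: sub_countable (frank_segment Pp); apply: subset_card_le => f [[]].
  have [|x px xf] := ball_avoiding_kernels Cp _ p.1 n_gt0; first by move=> f [].
  by exists x => _; split => // f fnz Wf; apply: xf.
exists (xp @` (D0 `*` [set: nat])); split.
- by apply: dense_perturbation => // a n D0a; have [] := xpP (a, n) (conj D0a I).
- exact: card_image_le.
- move=> f fnz; pose Q := [set p | (D0 `*` [set: nat]) p /\ W (rank p) (frank f)].
  apply: (@sub_countable _ _ _ (xp @` Q)).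
    apply: subset_card_le => _ [[p Pp <-] /= fx0]; exists p => //; split => //.
    have [//|Wfp] := W_total (rank p) (frank f).
    by have := (xpP p Pp).2 f fnz Wfp; rewrite fx0 eqxx.
  exact: sub_countable (card_image_le xp Q) (rank_segment fnz.1).
Qed.

End DenseConstruction.

Lemma overcomplete_of_countable_kernels (R : realType) (X : normedModType R)
    (A S : set X) :
  card_is_dens X A -> ~ countable A -> dense S -> S #<= A ->
  (forall f, nonzero_dual f -> countable (S `&` [set x | f x = 0])) ->
  overcomplete S.
Proof.
move=> [_ Amin] Aunc Sdense SA Sker.
have Sunc : ~ countable S by move=> /(sub_countable (Amin S Sdense)).
split.
  split; first by exists S; split => //; exact: card_eqxx.
  by move=> D' D'dense; exact: card_le_trans SA (Amin D' D'dense).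
move=> L LS LS_eq; apply: contrapT => /annihilator_of_not_lin_dense[f fnz fL].
apply: Sunc; rewrite -(eq_countable LS_eq); apply: sub_countable (Sker f fnz).
by apply: subset_card_le => l Ll; split; [exact: LS|exact: fL].
Qed.

Theorem theorem4p2 (R : realType) (X : completeNormedModType R) :
  CH R -> dens_omega1 X -> dual_dens_omega1 X ->
  exists S : set X, overcomplete S /\ dense S.
Proof.
move=> ch [A [Adens Aomega1]] [D [Ddense [Domega1 _]]].
have [W [I [W_total W_anti W_least I_segment R_le_I]]] := CH_omega1_order ch.
have Iunc : ~ countable I by move=> /(sub_countable R_le_I); exact: real_uncountable.
have omega1_eq_I := omega1_card_eq W_total W_anti W_least I_segment Iunc.
have [A_eq_I D_eq_I] := (omega1_eq_I _ _ Aomega1, omega1_eq_I _ _ Domega1).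
have [[D0 [D0dense D0_eq_A]] _] := Adens.
have P_le_I : D0 `*` [set: nat] #<= I.
  apply: (card_le_trans _ R_le_I); apply: setX_nat_card_le_real.
  by rewrite (card_le_eql D0_eq_A) (card_le_eql A_eq_I) card_leT.
have dual_le_I : (@is_dual_elt R X) #<= I.
  apply: (card_le_trans _ R_le_I); apply: (dual_card_le_real Ddense).
  by rewrite (card_le_eql D_eq_I) card_leT.
have [rank [rankI rank_segment]] := omega1_rank I_segment P_le_I.
have [frank [frankI frank_segment]] := omega1_rank I_segment dual_le_I.
have [S [Sdense S_le_P Sker]] := dense_set_countable_kernels W_total D0dense
  (fun f fd => rank_segment _ (frankI f fd)) (fun p Pp => frank_segment _ (rankI p Pp)).
exists S; split => //.
apply: overcomplete_of_countable_kernels Adens Aomega1.1 Sdense _ Sker.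
have [_ I_le_A] := (card_eqPle _ _).1 A_eq_I.
exact: card_le_trans S_le_P (card_le_trans P_le_I I_le_A).
Qed.
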